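(* Let $m\ge1$ and let $\Gamma_C$ be a gate with dangling edges $x_1,\dots,x_m,y_1,\dots,y_m$ consisting of $m$ ''lines'', where line $\ell$ runs from dangling edge $x_\ell$ to dangling edge $y_\ell$, every two lines cross exactly once, each crossing is a vertex with signature $\mathtt{PASS}$ at which one line uses the north/south edges and the other the west/east edges, and all edge weights are $1$. Then $\mathrm{Sig}(\Gamma_C)(x,y)=C(x,y):=(-1)^{\binom{\mathrm{hw}(x)}{2}}[y=x]$, and the cross cap function $O(x,y):=[y=x]$ satisfies $$O(x,y)=\tfrac{1-\mathrm{i}}{2}\,\mathrm{i}^{\mathrm{hw}(x)}C(x,y)+\tfrac{1+\mathrm{i}}{2}\,(-\mathrm{i})^{\mathrm{hw}(x)}C(x,y)\quad\text{for all }x,y\in\{0,1\}^m,$$ where $\mathrm{i}$ is the imaginary unit.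
   Context: $\mathtt{PASS}(1111)=-1$, $\mathtt{PASS}(0000)=\mathtt{PASS}(0101)=\mathtt{PASS}(1010)=1$, $\mathtt{PASS}=0$ otherwise (bits ordered north, east, south, west). $\mathrm{hw}(x)$ is the Hamming weight. $[\varphi]$ is the Iverson bracket. The signature of a gate $\Gamma$ with dangling edges $D$ is $\mathrm{Sig}(\Gamma,x)=\sum_{y\in\{0,1\}^{E(\Gamma)\setminus D}}w_\Gamma(xy)\prod_v f_v((xy)|_{I(v)})$. *)

From HB Require Import structures.
From mathcomp Require Import all_boot all_order all_algebra all_field.
Set Implicit Arguments. Unset Strict Implicit. Unset Printing Implicit Defensive.
Import Order.TTheory GRing.Theory Num.Theory.
Local Open Scope ring_scope.

Definition PASS (n e s w : bool) : algC :=
  match n, e, s, w with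
  | true, true, true, true => -1
  | false, false, false, false => 1
  | false, true, false, true => 1
  | true, false, true, false => 1
  | _, _, _, _ => 0
  end.

Definition hw (m : nat) (x : {ffun 'I_m -> bool}) : nat := (\sum_(i < m) (x i : nat))%N.

(* Line l (l : 'I_m) is cut by its m-1 crossings into m
   segments numbered 0..m-1 along the line; segment 0 is the dangling edge
   x_l and segment m-1 the dangling edge y_l.  An edge assignment is
   z : {ffun 'I_m -> m.-tuple bool}, z l giving the bits of the segments
   of line l.
   - ord l j : position (0..m-2) along line l of its crossing with line j;
     the crossing lies between segments ord l j and (ord l j).+1.
   - at the crossing of lines i < j:  ns i j = true iff line i uses the
     north/south edges (otherwise line j does);  fN i j = true iff the
     north edge is the later segment (ord .+1) of the NS line;  fE i j = true
     iff the east edge is the later segment of the WE line. *)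
Definition seg (m : nat) (z : {ffun 'I_m -> m.-tuple bool}) (l : 'I_m) (k : nat) : bool :=
  nth false (z l) k.

Definition crossing_val (m : nat) (ord : 'I_m -> 'I_m -> nat)
    (ns fN fE : 'I_m -> 'I_m -> bool) (z : {ffun 'I_m -> m.-tuple bool})
    (i j : 'I_m) : algC :=
  let p := if ns i j then i else j in
  let q := if ns i j then j else i in
  let pin := seg z p (ord p q) in
  let pout := seg z p (ord p q).+1 in
  let qin := seg z q (ord q p) in
  let qout := seg z q (ord q p).+1 in
  let north := if fN i j then pout else pin in
  let south := if fN i j then pin else pout in
  let east := if fE i j then qout else qin in
  let west := if fE i j then qin else qout in
  PASS north east south west.

Definition SigC (m : nat) (ord : 'I_m -> 'I_m -> nat) (ns fN fE : 'I_m -> 'I_m -> bool)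
    (x y : {ffun 'I_m -> bool}) : algC :=
  \sum_(z : {ffun 'I_m -> m.-tuple bool} |
          [forall l, (seg z l 0 == x l) && (seg z l m.-1 == y l)])
    \prod_(i : 'I_m) \prod_(j : 'I_m | (i < j)%N) crossing_val ord ns fN fE z i j.

(* Valid crossing orders: every line meets every other line exactly once,
   at distinct interior positions 0..m-2. *)
Definition valid_order (m : nat) (ord : 'I_m -> 'I_m -> nat) : Prop :=
  (forall l j : 'I_m, j != l -> (ord l j).+1 < m)%N /\
  (forall l j k : 'I_m, j != l -> k != l -> ord l j = ord l k -> j = k).

Definition Cfun (m : nat) (x y : {ffun 'I_m -> bool}) : algC :=
  (-1) ^+ 'C(hw x, 2) * (y == x)%:R.

Definition Ofun (m : nat) (x y : {ffun 'I_m -> bool}) : algC := (y == x)%:R.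

(* A nonzero PASS forces the north and south bits, and the east and west bits,
   to agree.  Every interior position of a line is a crossing, so a nonzero
   term of the signature is constant along each line: the only surviving
   edge assignment is z_l = x_l everywhere, which needs y = x.  Its PASS
   weights are -1 exactly at the 'C(hw x, 2) crossings of two lines carrying
   1.  For the cross cap identity, note that
   (1 - i)/2 i^h + (1 + i)/2 (-i)^h changes sign when h grows by 2 and equals
   1 at h = 0 and h = 1, hence equals (-1)^'C(h, 2). *)
From HB Require Import structures.
From mathcomp Require Import all_boot all_order all_algebra all_field.
From mathcomp Require Import ring.
Import Order.TTheory GRing.Theory Num.Theory.
Local Open Scope ring_scope.

Lemma PASS_neq0 n e s w : PASS n e s w != 0 -> n = s /\ e = w.
Proof. by case: n; case: e; case: s; case: w; rewrite /= ?eqxx. Qed.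

Lemma sum_pairs_andb n (b : 'I_n -> bool) :
  (\sum_(i < n) \sum_(j < n | i < j) (b i && b j) = 'C(\sum_(i < n) b i, 2))%N.
Proof.
elim: n b => [|n IH] b; first by rewrite !big_ord0.
rewrite big_ord_recr /= [X in 'C(X, _)]big_ord_recr /=.
rewrite [X in (_ + X)%N]big_pred0 ?addn0; last by move=> j /=; rewrite leqNgt ltn_ord.
under eq_bigr => i _ do rewrite big_mkcond big_ord_recr /= (ltn_ord i) -big_mkcond.
rewrite big_split /= IH; case: (b ord_max) => /=.
  by rewrite addn1 binS bin1; congr (_ + _)%N; apply: eq_bigr => i _; rewrite andbT.
by rewrite addn0 [X in (_ + X)%N]big1 ?addn0 // => i _; rewrite andbF.
Qed.

Lemma cross_cap_signE (h : nat) :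
  (1 - 'i) / 2 * 'i ^+ h + (1 + 'i) / 2 * (- 'i) ^+ h = (-1) ^+ 'C(h, 2) :> algC.
Proof.
have two_neq0 : (2 : algC) != 0 by rewrite pnatr_eq0.
have i2 : ('i : algC) ^+ 2 = -1 := sqrCi _.
pose f k : algC := (1 - 'i) / 2 * 'i ^+ k + (1 + 'i) / 2 * (- 'i) ^+ k.
have fSS k : f k.+2 = - f k.
  by rewrite /f -(addn2 k) !exprD sqrrN i2; ring.
have signSS k : (-1) ^+ 'C(k.+2, 2) = - (-1) ^+ 'C(k, 2) :> algC.
  rewrite binS bin1 binS bin1 -addnA addnS addnn exprD exprS.
  by rewrite -mul2n exprM sqrrN expr1n expr1n mulr1 mulrN1.
suff : f h = (-1) ^+ 'C(h, 2) /\ f h.+1 = (-1) ^+ 'C(h.+1, 2) by case.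
elim: h => [|h [IH0 IH1]].
  rewrite /f !bin_small // !expr0 !expr1; split; first by field.
  by rewrite -[RHS]opprK -i2; field.
by split=> //; rewrite fSS signSS IH0.
Qed.

Section PassGate.

Variables (m : nat) (ord : 'I_m -> 'I_m -> nat) (ns fN fE : 'I_m -> 'I_m -> bool).
Hypothesis hord : valid_order ord.

Definition gate_weight (z : {ffun 'I_m -> m.-tuple bool}) : algC :=
  \prod_(i : 'I_m) \prod_(j : 'I_m | (i < j)%N) crossing_val ord ns fN fE z i j.

Lemma crossing_ord_surj (l : 'I_m) (k : nat) :
  (k.+1 < m)%N -> exists2 j, j != l & ord l j = k.
Proof.
case: hord => ord_lt ord_inj k_lt.
set s := [seq ord l j | j <- enum (predC1 l)].
have uniq_s : uniq s.
  rewrite map_inj_in_uniq ?enum_uniq // => a b.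
  by rewrite !mem_enum => ha hb /ord_inj; apply.
have sub_s : {subset s <= iota 0 m.-1}.
  move=> v /mapP [j]; rewrite mem_enum => /ord_lt + ->.
  by rewrite mem_iota add0n ltn_predRL.
have size_s : (size (iota 0 m.-1) <= size s)%N.
  by rewrite size_iota size_map -cardE cardC1 card_ord.
have [_ s_full] := uniq_min_size uniq_s sub_s size_s.
have : k \in s by rewrite s_full mem_iota add0n ltn_predRL.
by case/mapP => j; rewrite mem_enum => jl ->; exists j.
Qed.

Lemma crossing_val_neq0 z i j : crossing_val ord ns fN fE z i j != 0 ->
  seg z i (ord i j) = seg z i (ord i j).+1 /\ seg z j (ord j i) = seg z j (ord j i).+1.
Proof.
rewrite /crossing_val; case: (ns i j); case: (fN i j); case: (fE i j);
  by move=> /PASS_neq0 [] /= -> ->.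
Qed.

Lemma seg_step_of_weight z (l : 'I_m) (k : nat) :
  gate_weight z != 0 -> (k.+1 < m)%N -> seg z l k = seg z l k.+1.
Proof.
move=> wz k_lt; have [j jl <-] := crossing_ord_surj l k k_lt.
have cross_neq0 (a b : 'I_m) : (a < b)%N -> crossing_val ord ns fN fE z a b != 0.
  by move=> ab; move/prodf_neq0: wz => /(_ a isT) /prodf_neq0; apply.
case: (ltngtP l j) => [lj | jl' | /val_inj lj].
- exact: (crossing_val_neq0 _ _ _ (cross_neq0 _ _ lj)).1.
- exact: (crossing_val_neq0 _ _ _ (cross_neq0 _ _ jl')).2.
- by rewrite lj eqxx in jl.
Qed.

Lemma seg_const_of_weight z (x y : {ffun 'I_m -> bool}) :
  [forall l, (seg z l 0 == x l) && (seg z l m.-1 == y l)] -> gate_weight z != 0 ->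
  (forall l k, (k < m)%N -> seg z l k = x l) /\ y = x.
Proof.
move=> /forallP bnd wz.
have seg_x l k : (k < m)%N -> seg z l k = x l.
  elim: k => [_ | k IH k_lt]; first by have /andP [/eqP] := bnd l.
  by rewrite -(seg_step_of_weight z l k wz k_lt) IH // ltnW.
split=> //; apply/ffunP => l; have /andP [_ /eqP <-] := bnd l.
by rewrite seg_x // ltn_predL (leq_ltn_trans _ (ltn_ord l)).
Qed.

Definition const_assign (x : {ffun 'I_m -> bool}) : {ffun 'I_m -> m.-tuple bool} :=
  [ffun l => nseq_tuple m (x l)].

Lemma seg_const_assign (x : {ffun 'I_m -> bool}) (l : 'I_m) (k : nat) :
  (k < m)%N -> seg (const_assign x) l k = x l.
Proof. by move=> k_lt; rewrite /seg ffunE nth_nseq k_lt. Qed.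

Lemma const_assignP (x : {ffun 'I_m -> bool}) (z : {ffun 'I_m -> m.-tuple bool}) :
  (forall l k, (k < m)%N -> seg z l k = x l) -> z = const_assign x.
Proof.
move=> seg_x; apply/ffunP => l; apply: val_inj; apply: (@eq_from_nth _ false).
  by rewrite !size_tuple.
move=> k; rewrite size_tuple => k_lt.
by rewrite -/(seg z l k) -/(seg _ l k) seg_x ?seg_const_assign.
Qed.

Lemma crossing_val_const_assign (x : {ffun 'I_m -> bool}) (i j : 'I_m) : i != j ->
  crossing_val ord ns fN fE (const_assign x) i j = (-1) ^+ (x i && x j).
Proof.
case: hord => ord_lt _ ij.
have seg_ord (a b : 'I_m) : a != b ->
    seg (const_assign x) a (ord a b) = x a /\ seg (const_assign x) a (ord a b).+1 = x a.
  move=> ab; have ord_ab_lt : ((ord a b).+1 < m)%N by apply: ord_lt; rewrite eq_sym.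
  by rewrite !seg_const_assign // ltnW.
have ji : j != i by rewrite eq_sym.
have [si1 si2] := seg_ord i j ij; have [sj1 sj2] := seg_ord j i ji.
rewrite /crossing_val; case: (ns i j); case: (fN i j); case: (fE i j);
  by rewrite /= ?si1 ?si2 ?sj1 ?sj2; case: (x i); case: (x j).
Qed.

Lemma gate_weight_const_assign (x : {ffun 'I_m -> bool}) :
  gate_weight (const_assign x) = (-1) ^+ 'C(hw x, 2).
Proof.
rewrite /gate_weight /hw -sum_pairs_andb -prodrXr; apply: eq_bigr => i _.
rewrite -prodrXr; apply: eq_bigr => j ij.
by rewrite crossing_val_const_assign // neq_ltn ij.
Qed.

Lemma SigC_eq_Cfun (x y : {ffun 'I_m -> bool}) : SigC ord ns fN fE x y = Cfun x y.
Proof.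
rewrite /SigC /Cfun (eq_bigr gate_weight) //.
have [-> | yx] := eqVneq y x; last first.
  rewrite mulr0 big1 // => z bnd; have [//|wz] := eqVneq (gate_weight z) 0.
  by have [_ yx'] := seg_const_of_weight z x y bnd wz; rewrite yx' eqxx in yx.
have bnd_x : [forall l, (seg (const_assign x) l 0 == x l) &&
                        (seg (const_assign x) l m.-1 == x l)].
  apply/forallP => l; have m_gt0 : (0 < m)%N by apply: leq_ltn_trans (ltn_ord l).
  by rewrite !seg_const_assign ?eqxx // ltn_predL.
rewrite mulr1 (bigD1 (const_assign x)) //= [X in _ + X]big1 ?addr0.
  exact: gate_weight_const_assign.
move=> z /andP [bnd zx]; have [//|wz] := eqVneq (gate_weight z) 0.
by have [/const_assignP zx' _] := seg_const_of_weight z x x bnd wz; rewrite zx' eqxx in zx.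
Qed.

End PassGate.

Lemma Ofun_cross_cap (m : nat) (x y : {ffun 'I_m -> bool}) :
  Ofun x y = (1 - 'i) / 2 * 'i ^+ hw x * Cfun x y
             + (1 + 'i) / 2 * (- 'i) ^+ hw x * Cfun x y.
Proof.
rewrite /Ofun /Cfun; case: (y == x); last by rewrite !mulr0 addr0.
by rewrite !mulr1 -mulrDl cross_cap_signE -exprMn mulrNN mulr1 expr1n.
Qed.

Theorem mainTheorem10 (m : nat) (hm : (1 <= m)%N)
    (ord : 'I_m -> 'I_m -> nat) (ns fN fE : 'I_m -> 'I_m -> bool)
    (hord : valid_order ord) :
  (forall x y : {ffun 'I_m -> bool}, SigC ord ns fN fE x y = Cfun x y) /\
  (forall x y : {ffun 'I_m -> bool},
     Ofun x y = (1 - 'i) / 2 * 'i ^+ hw x * Cfun x y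
                + (1 + 'i) / 2 * (- 'i) ^+ hw x * Cfun x y).
Proof. by split; [apply: SigC_eq_Cfun | apply: Ofun_cross_cap]. Qed.
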